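(* The $7$-dimensional nilpotent Lie algebra $(0,0,0,0,12,34,36)$ admits no calibrated $\mathrm{G}_2$-structure; more precisely, for every closed $\phi\in\Lambda^3\mathfrak g^*$ the $2$-form $e_7\lrcorner\,\phi$ lies in the span of $e^{13},e^{23},e^{34},e^{12},e^{36},e^{46}$ and satisfies $(e_7\lrcorner\,\phi)^3=0$.
   Context: Notation: $(a_1,\dots,a_n)$ denotes the Lie algebra having a basis $e^1,\dots,e^n$ of its dual with $de^i=a_i$, where e.g. ''$12$'' stands for $e^{12}=e^1\wedge e^2$; $e_1,\dots,e_n$ is the dual basis of $\mathfrak g$. A $3$-form on a $7$-dimensional Lie algebra defines a $\mathrm{G}_2$-structure if in some basis $f^1,\dots,f^7$ of $\mathfrak g^*$ it equals $f^{127}+f^{347}+f^{567}+f^{135}-f^{236}-f^{146}-f^{245}$; it is calibrated if it is closed under the Chevalley–Eilenberg differential $d$. *)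

From HB Require Import structures.
From mathcomp Require Import all_boot all_order all_algebra all_fingroup.
Set Implicit Arguments. Unset Strict Implicit. Unset Printing Implicit Defensive.
Import Order.TTheory GRing.Theory Num.Theory.
Local Open Scope ring_scope.

(* The Lie algebra g = R^7 with basis e_1..e_7, vectors are row vectors of
   coordinates; coordinate 1-based index i is stored at column i-1. *)
Notation vec R := 'rV[R]_7.

Definition x {R : realFieldType} (i : nat) (u : vec R) : R := u ord0 (inord i.-1).

Definition ebas {R : realFieldType} (i : nat) : vec R :=
  \row_(k < 7) (if nat_of_ord k == i.-1 then 1 else 0).

Definition e2 {R : realFieldType} (i j : nat) (u v : vec R) : R :=
  x i u * x j v - x j u * x i v.

Definition e3 {R : realFieldType} (i j k : nat) (u v w : vec R) : R :=
  x i u * (x j v * x k w - x k v * x j w)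
  - x i v * (x j u * x k w - x k u * x j w)
  + x i w * (x j u * x k v - x k u * x j v).

(* Lie bracket of (0,0,0,0,12,34,36), with the convention
   de(X,Y) = - e([X,Y]) for 1-forms e, so de^5 = e^{12}, de^6 = e^{34},
   de^7 = e^{36}, and de^1 = ... = de^4 = 0. *)
Definition bracket {R : realFieldType} (u v : vec R) : vec R :=
  \row_(k < 7) (if nat_of_ord k == 4%N then - e2 1 2 u v
                else if nat_of_ord k == 5%N then - e2 3 4 u v
                else if nat_of_ord k == 6%N then - e2 3 6 u v
                else 0).

Definition is_3form {R : realFieldType} (phi : vec R -> vec R -> vec R -> R) : Prop :=
  (forall (a : R) u u' v w, phi (a *: u + u') v w = a * phi u v w + phi u' v w) /\
  (forall (a : R) u v v' w, phi u (a *: v + v') w = a * phi u v w + phi u v' w) /\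
  (forall (a : R) u v w w', phi u v (a *: w + w') = a * phi u v w + phi u v w') /\
  (forall u w, phi u u w = 0) /\ (forall u v, phi u v v = 0) /\ (forall u v, phi u v u = 0).

Definition d3 {R : realFieldType} (phi : vec R -> vec R -> vec R -> R)
  (X0 X1 X2 X3 : vec R) : R :=
    phi (bracket X0 X1) X2 X3 - phi (bracket X0 X2) X1 X3 + phi (bracket X0 X3) X1 X2
  + phi (bracket X1 X2) X0 X3 - phi (bracket X1 X3) X0 X2 + phi (bracket X2 X3) X0 X1.

Definition closed3 {R : realFieldType} (phi : vec R -> vec R -> vec R -> R) : Prop :=
  forall X0 X1 X2 X3, d3 phi X0 X1 X2 X3 = 0.

Definition phi0 {R : realFieldType} (u v w : vec R) : R :=
  e3 1 2 7 u v w + e3 3 4 7 u v w + e3 5 6 7 u v w + e3 1 3 5 u v w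
  - e3 2 3 6 u v w - e3 1 4 6 u v w - e3 2 4 5 u v w.

(* phi is a G2-structure: there is a basis f^1..f^7 of g^* (the columns of an
   invertible matrix P, f^i(u) = (u *m P)_i) in which phi equals phi0. *)
Definition is_G2 {R : realFieldType} (phi : vec R -> vec R -> vec R -> R) : Prop :=
  exists P : 'M[R]_7, P \in unitmx /\
    forall u v w, phi u v w = phi0 (u *m P) (v *m P) (w *m P).

Definition contr7 {R : realFieldType} (phi : vec R -> vec R -> vec R -> R)
  (u v : vec R) : R := phi (ebas 7) u v.

(* omega ^ 3 for a 2-form omega, via the alternation formula; this equals
   8 * (omega /\ omega /\ omega) under the determinant convention, so it
   vanishes iff omega^3 does. *)
Definition cube2 {R : realFieldType} (om : vec R -> vec R -> R) (X : 'I_6 -> vec R) : R :=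
  \sum_(s : 'S_6) (-1) ^+ s *
     (om (X (s (inord 0))) (X (s (inord 1))) *
      om (X (s (inord 2))) (X (s (inord 3))) *
      om (X (s (inord 4))) (X (s (inord 5)))).

Definition in_span_e7 {R : realFieldType} (om : vec R -> vec R -> R) : Prop :=
  exists a1 a2 a3 a4 a5 a6 : R, forall u v,
    om u v = a1 * e2 1 3 u v + a2 * e2 2 3 u v + a3 * e2 3 4 u v
           + a4 * e2 1 2 u v + a5 * e2 3 6 u v + a6 * e2 4 6 u v.

(* Write omega = e_7 _| phi.  Evaluating d phi = 0 on suitable quadruples of basis
   vectors kills omega (e_5, _) and the coefficients of e^14, e^24, e^16, e^26 of omega;
   as omega (e_7, _) = 0 by alternation, only the six listed coefficients survive.
   In particular omega only involves the five coordinates 1, 2, 3, 4, 6, so its cube, a 6-form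
   in five variables, vanishes.  For the standard G2 form phi0 one has
   sum_k phi0 (w, z, e_k)^2 = |w /\ z|^2, so phi0 (w, z, _) = 0 forces w, z to be
   proportional; since phi (e_7, e_5, _) = 0, phi cannot be phi0 in another basis. *)

From HB Require Import structures.
From mathcomp Require Import all_boot all_order all_algebra all_fingroup.
From mathcomp Require Import ring lra.
Import GRing.Theory Num.Theory.
Local Open Scope ring_scope.

Lemma sum_alternating (R : pzRingType) n (F : 'I_n -> 'I_n -> R) (a b : 'I_n -> R) :
  (forall i, F i i = 0) -> (forall i j, F j i = - F i j) ->
  \sum_(i < n) \sum_(j < n) F i j * (a i * b j) =
  \sum_(i < n) \sum_(j < n | (i < j)%N) F i j * (a i * b j - a j * b i).
Proof.
move=> F_diag F_anti.
have lower : \sum_(i < n) \sum_(j < n | (j < i)%N) F i j * (a i * b j) =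
             - \sum_(i < n) \sum_(j < n | (i < j)%N) F i j * (a j * b i).
  rewrite (exchange_big_dep xpredT) //= -sumrN; apply: eq_bigr => i _.
  by rewrite -sumrN; apply: eq_bigr => j _; rewrite F_anti mulNr.
under [RHS]eq_bigr do rewrite (eq_bigr _ (fun j _ => mulrBr _ _ _)) sumrB.
rewrite sumrB -lower -big_split /=; apply: eq_bigr => i _.
rewrite (bigID (fun j : 'I_n => (i < j)%N)) /=; congr (_ + _).
rewrite (bigD1 i) ?ltnn //= F_diag mul0r add0r; apply: eq_bigl => j.
by rewrite -leqNgt ltn_neqAle andbC.
Qed.

Section NilpotentG2.
Variable R : realFieldType.
Implicit Types u v w z : vec R.

Lemma x_ebas i j : (0 < i <= 7)%N -> (0 < j)%N ->
  x i (ebas j : vec R) = if i == j then 1 else 0.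
Proof.
move=> /andP[i_gt0 i_le7] j_gt0; rewrite /x /ebas mxE inordK ?prednK //.
by case: i i_gt0 i_le7 => // i; case: j j_gt0.
Qed.

Lemma x_ord (i : 'I_7) u : x i.+1 u = u 0 i.
Proof. by rewrite /x inord_val. Qed.

Lemma row7E u : u = x 1 u *: ebas 1 + x 2 u *: ebas 2 + x 3 u *: ebas 3 + x 4 u *: ebas 4
                  + x 5 u *: ebas 5 + x 6 u *: ebas 6 + x 7 u *: ebas 7.
Proof.
apply/rowP => k; rewrite !mxE.
by case: k => [[|[|[|[|[|[|[|k]]]]]]] lt_k7] //=; rewrite -(x_ord (Ordinal lt_k7)); ring.
Qed.

Lemma bracketE u v : bracket u v =
  (- e2 1 2 u v) *: ebas 5 + (- e2 3 4 u v) *: ebas 6 + (- e2 3 6 u v) *: ebas 7.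
Proof.
apply/rowP => k; rewrite !mxE.
by case: k => [[|[|[|[|[|[|[|k]]]]]]] lt_k7] //=; ring.
Qed.

Lemma cube2_eq0_of_coords n (om : vec R -> vec R -> R) (y : vec R -> 'I_n -> R)
    (W : 'I_n -> 'I_n -> R) :
  (n < 6)%N ->
  (forall u v, om u v = \sum_(i < n) \sum_(j < n) W i j * (y u i * y v j)) ->
  forall X, cube2 om X = 0.
Proof.
(* Each term of the expansion is a 6 x 6 determinant whose rows are indexed by at most
   n < 6 coordinates, hence has two equal rows. *)
move=> n_lt6 omE X; rewrite /cube2.
pose F (s : 'S_6) i j (p : 'I_n * 'I_n) :=
  W p.1 p.2 * (y (X (s (inord i))) p.1 * y (X (s (inord j))) p.2).
under eq_bigr => s _ do rewrite !omE !pair_bigA.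
transitivity (\sum_(s : 'S_6) \sum_p \sum_q \sum_r
                 ((-1) ^+ s * (F s 0%N 1%N p * F s 2%N 3%N q * F s 4%N 5%N r))).
  apply: eq_bigr => s _; rewrite !mulr_suml mulr_sumr; apply: eq_bigr => p _.
  rewrite -mulrA mulr_suml !mulr_sumr; apply: eq_bigr => q _.
  by rewrite !mulr_sumr; apply: eq_bigr => r _; rewrite /F !mulrA.
rewrite exchange_big; apply: big1 => p _.
rewrite exchange_big; apply: big1 => q _.
rewrite exchange_big; apply: big1 => r _.
pose idx := tnth [tuple p.1; p.2; q.1; q.2; r.1; r.2].
pose M := \matrix_(i < 6, j < 6) y (X j) (idx i).
have detM0 : \det M = 0.
  have /injectivePn[i [j neq_ij eq_ij]] : ~~ injectiveb idx.
    by apply/injectiveP => /leq_card; rewrite !card_ord leqNgt n_lt6.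
  by apply: (determinant_alternate neq_ij) => k; rewrite !mxE eq_ij.
transitivity (W p.1 p.2 * W q.1 q.2 * W r.1 r.2 * \det M); last by rewrite detM0 mulr0.
rewrite /determinant mulr_sumr; apply: eq_bigr => s _.
rewrite (eq_bigr (fun i : 'I_6 => M (inord i) (s (inord i)))); last first.
  by move=> i _; rewrite inord_val.
rewrite -(big_mkord xpredT (fun k => M (inord k) (s (inord k)))).
rewrite 6?big_ltn // big_geq // !mxE /idx !(tnth_nth p.1) !inordK //= /F.
(* ring is very slow unless the sign (-1) ^+ s is abstracted *)
set sgn := (-1) ^+ s; ring.
Qed.

Lemma sum_phi0_sqr w z :
  \sum_(k < 7) phi0 w z (ebas k.+1) ^+ 2 =
  \sum_(i < 7) \sum_(j < 7 | (i < j)%N) (x i.+1 w * x j.+1 z - x j.+1 w * x i.+1 z) ^+ 2.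
Proof.
under [RHS]eq_bigr do rewrite big_mkcond.
rewrite !big_ord_recl !big_ord0 /= /phi0 /e3 !x_ebas //=; ring.
Qed.

Lemma phi0_contr_eq0 w z : (forall k, phi0 w z (ebas k) = 0) ->
  forall i j : 'I_7, w 0 i * z 0 j = w 0 j * z 0 i.
Proof.
move=> phi0_wz.
have := sum_phi0_sqr w z; rewrite pair_big_dep big1 => [/esym sq0|k _]; last first.
  by rewrite phi0_wz expr0n.
have wedge0 (i j : 'I_7) : (i < j)%N -> w 0 i * z 0 j = w 0 j * z 0 i.
  move=> lt_ij; apply/eqP; rewrite -subr_eq0 -sqrf_eq0 -!x_ord.
  by rewrite (psumr_eq0P _ sq0 (i := (i, j))) // => p _; exact: sqr_ge0.
by move=> i j; case: (ltngtP i j) => [/wedge0 | /wedge0 -> | /val_inj ->].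
Qed.

Lemma proportional_rows {n} {w z : 'rV[R]_n} :
  (forall i j, w 0 i * z 0 j = w 0 j * z 0 i) -> forall k, z 0 k *: w = w 0 k *: z.
Proof. by move=> wz_wedge k; apply/rowP => j; rewrite !mxE wz_wedge mulrC. Qed.

Definition coord5 (i : 'I_5) : nat := nth 0 [:: 1; 2; 3; 4; 6] i.

Section ClosedForm.
Variable phi : vec R -> vec R -> vec R -> R.
Hypothesis phi3 : is_3form phi.

Lemma phiDl u u' v w : phi (u + u') v w = phi u v w + phi u' v w.
Proof. by case: phi3 => linl _; rewrite -[u]scale1r linl mul1r scale1r. Qed.
Lemma phiDm u v v' w : phi u (v + v') w = phi u v w + phi u v' w.
Proof. by case: phi3 => _ [linm _]; rewrite -[v]scale1r linm mul1r scale1r. Qed.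
Lemma phiDr u v w w' : phi u v (w + w') = phi u v w + phi u v w'.
Proof. by case: phi3 => _ [_ [linr _]]; rewrite -[w]scale1r linr mul1r scale1r. Qed.

Lemma phiZl a u v w : phi (a *: u) v w = a * phi u v w.
Proof.
case: phi3 => linl _; have := linl (-1) u u v w.
by rewrite scaleN1r addNr mulN1r addNr => phi0l; rewrite -[a *: u]addr0 linl phi0l addr0.
Qed.
Lemma phiZm a u v w : phi u (a *: v) w = a * phi u v w.
Proof.
case: phi3 => _ [linm _]; have := linm (-1) u v v w.
by rewrite scaleN1r addNr mulN1r addNr => phi0m; rewrite -[a *: v]addr0 linm phi0m addr0.
Qed.
Lemma phiZr a u v w : phi u v (a *: w) = a * phi u v w.
Proof.
case: phi3 => _ [_ [linr _]]; have := linr (-1) u v w w.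
by rewrite scaleN1r addNr mulN1r addNr => phi0r; rewrite -[a *: w]addr0 linr phi0r addr0.
Qed.

Lemma phi_uuw u w : phi u u w = 0. Proof. by case: phi3 => _ [_ [_ [->]]]. Qed.
Lemma phi_uvv u v : phi u v v = 0. Proof. by case: phi3 => _ [_ [_ [_ [->]]]]. Qed.
Lemma phi_uvu u v : phi u v u = 0. Proof. by case: phi3 => _ [_ [_ [_ [_ ->]]]]. Qed.

Lemma phiC12 u v w : phi v u w = - phi u v w.
Proof.
have := phi_uuw (u + v) w; rewrite !(phiDl, phiDm) !phi_uuw add0r addr0 => uv_vu.
by apply/eqP; rewrite -addr_eq0 addrC uv_vu.
Qed.
Lemma phiC23 u v w : phi u w v = - phi u v w.
Proof.
have := phi_uvv u (v + w); rewrite !(phiDm, phiDr) !phi_uvv add0r addr0 => vw_wv.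
by apply/eqP; rewrite -addr_eq0 addrC vw_wv.
Qed.
Lemma phiC13 u v w : phi w v u = - phi u v w.
Proof. by rewrite phiC12 phiC23 phiC12 opprK. Qed.

Hypothesis dphi0 : closed3 phi.

Lemma phi_bracketl u v y z : phi (bracket u v) y z =
  - e2 1 2 u v * phi (ebas 5) y z - e2 3 4 u v * phi (ebas 6) y z
  - e2 3 6 u v * phi (ebas 7) y z.
Proof. by rewrite bracketE !(phiDl, phiZl) !mulNr. Qed.

Ltac solve_d3 := rewrite /d3 !phi_bracketl /e2 !x_ebas //= ?phi_uuw ?phi_uvv ?phi_uvu; lra.

(* The only nonzero brackets of basis vectors are [e1, e2] = - e5, [e3, e4] = - e6 and
   [e3, e6] = - e7, so for the a, b used below d phi (e3, e6, a, b), d phi (e1, e2, e7, b)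
   and d phi (e3, e4, a, e7) reduce to a single value of phi up to sign. *)
Lemma phi_e7_e5_ebas l : (0 < l <= 7)%N -> phi (ebas 7) (ebas 5) (ebas l) = 0.
Proof.
case: l => [|[|[|[|[|[|[|[|l]]]]]]]] //= _.
- by have := dphi0 (ebas 3) (ebas 6) (ebas 5) (ebas 1); solve_d3.
- by have := dphi0 (ebas 3) (ebas 6) (ebas 5) (ebas 2); solve_d3.
- have := phiC12 (ebas 7) (ebas 5) (ebas 3).
  by have := dphi0 (ebas 1) (ebas 2) (ebas 7) (ebas 3); solve_d3.
- by have := dphi0 (ebas 3) (ebas 6) (ebas 5) (ebas 4); solve_d3.
- exact: phi_uvv.
- have := phiC12 (ebas 7) (ebas 5) (ebas 6).
  by have := dphi0 (ebas 1) (ebas 2) (ebas 7) (ebas 6); solve_d3.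
- exact: phi_uvu.
Qed.

Lemma contr7_e5 v : contr7 phi (ebas 5) v = 0.
Proof.
by rewrite /contr7 (row7E v) !(phiDr, phiZr) !phi_e7_e5_ebas // !mulr0 !addr0.
Qed.

Lemma contr7_coef_eq0 :
  [/\ contr7 phi (ebas 1) (ebas 4) = 0, contr7 phi (ebas 2) (ebas 4) = 0,
      contr7 phi (ebas 1) (ebas 6) = 0 & contr7 phi (ebas 2) (ebas 6) = 0].
Proof.
rewrite /contr7; split.
- by have := dphi0 (ebas 3) (ebas 6) (ebas 1) (ebas 4); solve_d3.
- by have := dphi0 (ebas 3) (ebas 6) (ebas 2) (ebas 4); solve_d3.
- have := phiC13 (ebas 7) (ebas 1) (ebas 6).
  by have := dphi0 (ebas 3) (ebas 4) (ebas 1) (ebas 7); solve_d3.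
- have := phiC13 (ebas 7) (ebas 2) (ebas 6).
  by have := dphi0 (ebas 3) (ebas 4) (ebas 2) (ebas 7); solve_d3.
Qed.

Lemma contr7_coords u v : contr7 phi u v =
  \sum_(i < 5) \sum_(j < 5)
     contr7 phi (ebas (coord5 i)) (ebas (coord5 j)) * (x (coord5 i) u * x (coord5 j) v).
Proof.
rewrite !big_ord_recl !big_ord0 /coord5 /= /contr7.
rewrite [in LHS](row7E u) [in LHS](row7E v) !(phiDm, phiZm, phiDr, phiZr).
rewrite !phi_uuw !phi_uvv !phi_uvu !(phiC23 (ebas 7) (ebas 5)) !phi_e7_e5_ebas //.
ring.
Qed.

Lemma contr7_in_span : in_span_e7 (contr7 phi).
Proof.
have [c14 c24 c16 c26] := contr7_coef_eq0.
exists (contr7 phi (ebas 1) (ebas 3)), (contr7 phi (ebas 2) (ebas 3)),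
  (contr7 phi (ebas 3) (ebas 4)), (contr7 phi (ebas 1) (ebas 2)),
  (contr7 phi (ebas 3) (ebas 6)), (contr7 phi (ebas 4) (ebas 6)) => u v.
rewrite contr7_coords sum_alternating => [|i|i j]; [|exact: phi_uvv|exact: phiC23].
under eq_bigr do rewrite big_mkcond.
rewrite !big_ord_recl !big_ord0 /coord5 /= c14 c24 c16 c26 /e2; ring.
Qed.

Lemma contr7_cube X : cube2 (contr7 phi) X = 0.
Proof. exact: cube2_eq0_of_coords _ contr7_coords X. Qed.

Lemma closed3_not_G2 : ~ is_G2 phi.
Proof.
case=> P [P_unit phiE].
pose w := ebas 7 *m P; pose z := ebas 5 *m P.
have wz_wedge : forall i j : 'I_7, w 0 i * z 0 j = w 0 j * z 0 i.
  apply: phi0_contr_eq0 => k.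
  by rewrite -[ebas k](mulmxKV P_unit) -phiE; exact: contr7_e5.
have wP : w *m invmx P = ebas 7 by rewrite mulmxK.
have zP : z *m invmx P = ebas 5 by rewrite mulmxK.
clearbody w z.
have w0 : w = 0.
  apply/rowP => k; have := congr1 (mulmx^~ (invmx P)) (proportional_rows wz_wedge k).
  rewrite -!scalemxAl wP zP => /rowP/(_ (inord 4)).
  by rewrite !mxE inordK //=; lra.
have := wP; rewrite w0 mul0mx => /rowP/(_ (inord 6))/eqP.
by rewrite !mxE inordK //= eq_sym oner_eq0.
Qed.

End ClosedForm.
End NilpotentG2.

Theorem mainTheorem8 (R : realFieldType) :
  (forall phi : vec R -> vec R -> vec R -> R,
     is_3form phi -> closed3 phi -> ~ is_G2 phi) /\
  (forall phi : vec R -> vec R -> vec R -> R,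
     is_3form phi -> closed3 phi ->
     in_span_e7 (contr7 phi) /\ (forall X : 'I_6 -> vec R, cube2 (contr7 phi) X = 0)).
Proof.
split=> phi phi3 dphi0; first exact: closed3_not_G2.
by split; [exact: contr7_in_span | exact: contr7_cube].
Qed.
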